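(* Let $1\le p<\infty$, let $X$ be an infinite dimensional Banach space and let $(X_n)_{n=1}^\infty$ be a sequence of Banach spaces over $\mathbb{K}$ having a subsequence that contains isomorphs of $X$ uniformly. Then $\left(\sum_n X_n\right)_p^+\setminus\left(\sum_n X_n\right)_p$ is $\dim X$-spaceable in the Fréchet space $\left(\sum_n X_n\right)_p^+$.
   Context: For $0<q<\infty$, $\left(\sum_n X_n\right)_q$ is the space of all sequences $(x_n)_{n=1}^\infty$ with $x_n\in X_n$ and $\|(x_n)\|_q:=\left(\sum_{n=1}^\infty\|x_n\|_{X_n}^q\right)^{1/q}<\infty$. For $1\le p<\infty$, $\left(\sum_n X_n\right)_p^+:=\bigcap_{q>p}\left(\sum_n X_n\right)_q$, endowed with the locally convex topology generated by the family of norms $\|\cdot\|_q$, $q>p$ (equivalently by $\|\cdot\|_{p_k}$, $k\in\mathbb{N}$, for any decreasing sequence $p_k\to p$); this is a Fréchet space. A family $(Y_i)_{i\in I}$ of Banach spaces contains isomorphs of $X$ uniformly if there exist $\delta>0$ and isomorphic embeddings $R_i\colon X\to Y_i$ with $\max\{\|R_i\|,\|R_i^{-1}\|\}\le\delta$ for every $i\in I$. For a cardinal $\mu$ and a subset $A$ of a topological vector space $E$, $A$ is called $\mu$-spaceable if $A\cup\{0\}$ contains a closed linear subspace of $E$ of algebraic dimension $\mu$. $\dim X$ is the algebraic dimension of $X$. *)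

From Stdlib Require Import Reals List.
Unset Implicit Arguments.
Open Scope R_scope.

(** Scalar fields: K is either R or C (C modelled as R*R). *)
Record Scalars := mkScalars {
  sc :> Type; s0 : sc; s1 : sc;
  sadd : sc -> sc -> sc; smul : sc -> sc -> sc; sopp : sc -> sc;
  sabs : sc -> R }.

Definition RK : Scalars := @mkScalars R 0 1 Rplus Rmult Ropp Rabs.

Definition Cmul (z w : R * R) : R * R :=
  (fst z * fst w - snd z * snd w, fst z * snd w + snd z * fst w).

Definition CK : Scalars :=
  @mkScalars (R * R) (0, 0) (1, 0)
    (fun z w => (fst z + fst w, snd z + snd w)) Cmul
    (fun z => (- fst z, - snd z))
    (fun z => sqrt (fst z ^ 2 + snd z ^ 2)).

Record VSops (K : Scalars) := mkVSops {
  vc :> Type; v0 : vc; vadd : vc -> vc -> vc; vopp : vc -> vc;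
  vscal : sc K -> vc -> vc }.
Arguments vc {K} _.
Arguments v0 {K} v.
Arguments vadd {K v} _ _.
Arguments vopp {K v} _.
Arguments vscal {K v} _ _.

Fixpoint lincomb {K : Scalars} {V : VSops K} (l : list (sc K * vc V)) : vc V :=
  match l with
  | nil => v0 V
  | (a, x) :: t => vadd (vscal a x) (lincomb t)
  end.

Definition in_span {K : Scalars} {V : VSops K} (B : vc V -> Prop) (x : vc V) :=
  exists l : list (sc K * vc V), Forall (fun ax => B (snd ax)) l /\ x = lincomb l.

Definition lin_indep {K : Scalars} {V : VSops K} (B : vc V -> Prop) :=
  forall l : list (sc K * vc V), NoDup (map snd l) ->
    Forall (fun ax => B (snd ax)) l -> lincomb l = v0 V ->
    Forall (fun ax => fst ax = s0 K) l.

Definition hamel_basis_of {K : Scalars} (V : VSops K) (S : vc V -> Prop) (B : vc V -> Prop) :=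
  (forall x, B x -> S x) /\ lin_indep B /\ (forall x, S x -> in_span B x).

Record NormedSpace (K : Scalars) := mkNormedSpace {
  nsv :> VSops K;
  nnorm : vc nsv -> R;
  ns_add_assoc : forall x y z : vc nsv, vadd x (vadd y z) = vadd (vadd x y) z;
  ns_add_comm : forall x y : vc nsv, vadd x y = vadd y x;
  ns_add_0 : forall x : vc nsv, vadd x (v0 nsv) = x;
  ns_add_opp : forall x : vc nsv, vadd x (vopp x) = v0 nsv;
  ns_scal_assoc : forall (a b : sc K) (x : vc nsv), vscal a (vscal b x) = vscal (smul K a b) x;
  ns_scal_1 : forall x : vc nsv, vscal (s1 K) x = x;
  ns_scal_distr_v : forall (a : sc K) (x y : vc nsv), vscal a (vadd x y) = vadd (vscal a x) (vscal a y);
  ns_scal_distr_s : forall (a b : sc K) (x : vc nsv), vscal (sadd K a b) x = vadd (vscal a x) (vscal b x);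
  ns_norm_nonneg : forall x, 0 <= nnorm x;
  ns_norm_zero : forall x, nnorm x = 0 -> x = v0 nsv;
  ns_norm_scal : forall a x, nnorm (vscal a x) = sabs K a * nnorm x;
  ns_norm_triangle : forall x y, nnorm (vadd x y) <= nnorm x + nnorm y }.
Arguments nnorm {K n} _.
Arguments nsv {K} _.

Definition vsub {K : Scalars} {V : VSops K} (x y : vc V) : vc V := vadd x (vopp y).

Definition complete {K : Scalars} (X : NormedSpace K) :=
  forall u : nat -> vc X,
    (forall eps, eps > 0 -> exists N, forall m n, (m >= N)%nat -> (n >= N)%nat ->
        nnorm (vsub (u m) (u n)) < eps) ->
    exists l : vc X, forall eps, eps > 0 -> exists N, forall n, (n >= N)%nat ->
        nnorm (vsub (u n) l) < eps.

Definition infinite_dim {K : Scalars} (X : NormedSpace K) :=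
  forall l : list (vc X), ~ (forall x, in_span (fun y => In y l) x).

Definition linear_map {K : Scalars} {X Y : NormedSpace K} (T : vc X -> vc Y) :=
  (forall x y, T (vadd x y) = vadd (T x) (T y)) /\
  (forall a x, T (vscal a x) = vscal a (T x)).

Definition contains_isomorphs_uniformly {K : Scalars} (X : NormedSpace K)
    (Y : nat -> NormedSpace K) :=
  exists delta, 0 < delta /\
    forall k, exists T : vc X -> vc (Y k), linear_map T /\
      forall x, nnorm (T x) <= delta * nnorm x /\ nnorm x <= delta * nnorm (T x).

Definition seqVS {K : Scalars} (Xs : nat -> NormedSpace K) : VSops K :=
  @mkVSops K (forall n, vc (Xs n)) (fun n => v0 (Xs n))
    (fun x y n => vadd (x n) (y n)) (fun x n => vopp (x n))
    (fun a x n => vscal a (x n)).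

(** a^q for a >= 0 (with 0^q = 0). *)
Definition rpow (a q : R) : R := if Rle_dec a 0 then 0 else Rpower a q.

Definition summable (f : nat -> R) := exists l, infinite_sum f l.

Definition in_lq {K : Scalars} (Xs : nat -> NormedSpace K) (q : R) (x : vc (seqVS Xs)) :=
  summable (fun n => rpow (nnorm (x n)) q).

Definition in_lp_plus {K : Scalars} (Xs : nat -> NormedSpace K) (p : R) (x : vc (seqVS Xs)) :=
  forall q, p < q -> in_lq Xs q x.

(** Convergence in the Fréchet topology of (sum X_n)_p^+ : ||u_k - x||_q -> 0 for all q > p *)
Definition lp_plus_conv {K : Scalars} (Xs : nat -> NormedSpace K) (p : R)
    (u : nat -> vc (seqVS Xs)) (x : vc (seqVS Xs)) :=
  forall q, p < q -> forall eps, eps > 0 -> exists N, forall k, (k >= N)%nat ->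
    exists s, infinite_sum (fun n => rpow (nnorm (vsub (u k n) (x n))) q) s /\ s < eps.

(** W is a closed linear subspace of the Fréchet space (sum X_n)_p^+
    (closedness = sequential closedness, equivalent since the space is metrizable). *)
Definition closed_subspace_lp_plus {K : Scalars} (Xs : nat -> NormedSpace K) (p : R)
    (W : vc (seqVS Xs) -> Prop) :=
  (forall x, W x -> in_lp_plus Xs p x) /\
  W (v0 (seqVS Xs)) /\
  (forall x y, W x -> W y -> W (vadd x y)) /\
  (forall (a : sc K) x, W x -> W (vscal a x)) /\
  (forall (u : nat -> vc (seqVS Xs)) x, (forall k, W (u k)) -> in_lp_plus Xs p x ->
     lp_plus_conv Xs p u x -> W x).

Definition bijective_map {A B : Type} (f : A -> B) :=
  (forall a1 a2, f a1 = f a2 -> a1 = a2) /\ (forall b, exists a, f a = b).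

From Stdlib Require Import Reals List Lra Lia Classical ClassicalEpsilon
  FunctionalExtensionality ProofIrrelevance Eqdep_dec.
From mathcomp Require classical_sets.
Open Scope R_scope.

(** Put [weight k = (k+1)^(-1/p)] and let [embed x] carry
    [weight k * T k x] at position [phi k] and 0 elsewhere.  Since
    [sum_k (k+1)^(-q/p)] converges exactly when [q > p], every nonzero
    [embed x] lies in [(sum Xs)_p^+] but not in [(sum Xs)_p].  The map [embed]
    is linear and injective (coordinate [phi 0] has weight 1), so its range
    [W] has a Hamel basis in bijection with one of [X]; and [W] is closed
    because Fréchet convergence gives coordinatewise convergence, which
    together with completeness of [X] keeps limits inside [W]. *)

Record ScalarLaws (K : Scalars) := {
  sadd_00 : sadd K (s0 K) (s0 K) = s0 K;
  sadd_opp : forall c, sadd K c (sopp K c) = s0 K;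
  smul_inv : forall a, a <> s0 K -> exists b, smul K b a = s1 K;
  smul_comm : forall a b, smul K a b = smul K b a;
  sabs_0 : sabs K (s0 K) = 0;
  sabs_m1 : sabs K (sopp K (s1 K)) = 1;
  real_emb : R -> sc K;
  sabs_real_emb : forall r, sabs K (real_emb r) = Rabs r }.

Arguments sadd_00 {K} _. Arguments sadd_opp {K} _ c. Arguments smul_inv {K} _ a _.
Arguments smul_comm {K} _ a b. Arguments sabs_0 {K} _. Arguments sabs_m1 {K} _.
Arguments real_emb {K} _ r. Arguments sabs_real_emb {K} _ r.

Lemma scalar_laws_R : ScalarLaws RK.
Proof.
unshelve eapply (Build_ScalarLaws RK _ _ _ _ _ _ (fun r => r) _); simpl; intros.
- ring.
- ring.
- exists (/ a). field. exact H.
- ring.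
- apply Rabs_R0.
- rewrite Rabs_Ropp. apply Rabs_R1.
- reflexivity.
Qed.

Lemma scalar_laws_C : ScalarLaws CK.
Proof.
unshelve eapply (Build_ScalarLaws CK _ _ _ _ _ _ (fun r => (r, 0)) _); simpl; intros.
- f_equal; ring.
- f_equal; ring.
- destruct a as [x y]. simpl in *.
  assert (Hn : x * x + y * y <> 0).
  { intro Hz. apply H. assert (x = 0) by nra. assert (y = 0) by nra. subst. reflexivity. }
  exists (x / (x * x + y * y), - y / (x * x + y * y)). unfold Cmul; simpl.
  f_equal; field; exact Hn.
- unfold Cmul. f_equal; ring.
- match goal with |- sqrt ?e = _ => replace e with 0 by ring end. apply sqrt_0.
- match goal with |- sqrt ?e = _ => replace e with 1 by ring end. apply sqrt_1.
- match goal with |- sqrt ?e = _ => replace e with (Rsqr r) by (unfold Rsqr; ring) end.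
  apply sqrt_Rsqr_abs.
Qed.

Lemma scalar_laws_of (K : Scalars) : K = RK \/ K = CK -> inhabited (ScalarLaws K).
Proof. intros [-> | ->]; constructor; [exact scalar_laws_R | exact scalar_laws_C]. Qed.

Arguments ns_add_assoc {K n} x y z. Arguments ns_add_comm {K n} x y.
Arguments ns_add_0 {K n} x. Arguments ns_add_opp {K n} x.
Arguments ns_scal_assoc {K n} a b x. Arguments ns_scal_1 {K n} x.
Arguments ns_scal_distr_v {K n} a x y. Arguments ns_scal_distr_s {K n} a b x.
Arguments ns_norm_nonneg {K n} x. Arguments ns_norm_zero {K n} x _.
Arguments ns_norm_scal {K n} a x. Arguments ns_norm_triangle {K n} x y.

Section VectorAlgebra.
Context {K : Scalars} (laws : ScalarLaws K) (X : NormedSpace K).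

Lemma add_0l (x : vc X) : vadd (v0 X) x = x.
Proof. rewrite ns_add_comm. apply ns_add_0. Qed.

Lemma add_cancel_l (x y z : vc X) : vadd x y = vadd x z -> y = z.
Proof.
intro H.
assert (E : forall w, w = vadd (vopp x) (vadd x w)).
{ intro w. rewrite ns_add_assoc, (ns_add_comm (vopp x)), ns_add_opp, add_0l. reflexivity. }
rewrite (E y), (E z), H. reflexivity.
Qed.

Lemma opp_unique (x y : vc X) : vadd x y = v0 X -> y = vopp x.
Proof. intro H. apply (add_cancel_l x). rewrite H, ns_add_opp. reflexivity. Qed.

Lemma add_idem_0 (x : vc X) : vadd x x = x -> x = v0 X.
Proof. intro H. apply (add_cancel_l x). rewrite H, ns_add_0. reflexivity. Qed.

Lemma scal_0l (x : vc X) : vscal (s0 K) x = v0 X.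
Proof. apply add_idem_0. rewrite <- ns_scal_distr_s, (sadd_00 laws). reflexivity. Qed.

Lemma scal_0r (a : sc K) : vscal a (v0 X) = v0 X.
Proof. apply add_idem_0. rewrite <- ns_scal_distr_v, ns_add_0. reflexivity. Qed.

Lemma scal_opp (a : sc K) (x : vc X) : vscal (sopp K a) x = vopp (vscal a x).
Proof. apply opp_unique. rewrite <- ns_scal_distr_s, (sadd_opp laws), scal_0l. reflexivity. Qed.

Lemma opp_scal_m1 (x : vc X) : vopp x = vscal (sopp K (s1 K)) x.
Proof. rewrite scal_opp, ns_scal_1. reflexivity. Qed.

Lemma opp_opp (x : vc X) : vopp (vopp x) = x.
Proof. symmetry. apply opp_unique. rewrite ns_add_comm. apply ns_add_opp. Qed.

Lemma opp_add (x y : vc X) : vopp (vadd x y) = vadd (vopp x) (vopp y).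
Proof.
symmetry. apply opp_unique.
rewrite <- ns_add_assoc, (ns_add_assoc y (vopp x) (vopp y)), (ns_add_comm y (vopp x)),
  <- (ns_add_assoc (vopp x) y (vopp y)), ns_add_opp, ns_add_0, ns_add_opp.
reflexivity.
Qed.

Lemma sub_eq0 (x y : vc X) : vsub x y = v0 X -> x = y.
Proof.
unfold vsub. intro H. apply opp_unique in H.
rewrite <- (opp_opp x), <- H, opp_opp. reflexivity.
Qed.

Lemma norm_0 : nnorm (v0 X) = 0.
Proof. rewrite <- (scal_0l (v0 X)), ns_norm_scal, (sabs_0 laws). ring. Qed.

Lemma norm_opp (x : vc X) : nnorm (vopp x) = nnorm x.
Proof. rewrite opp_scal_m1, ns_norm_scal, (sabs_m1 laws). ring. Qed.

Lemma norm_sub_sym (x y : vc X) : nnorm (vsub x y) = nnorm (vsub y x).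
Proof.
rewrite <- (norm_opp (vsub y x)). unfold vsub.
rewrite opp_add, opp_opp, ns_add_comm. reflexivity.
Qed.

Lemma norm_sub_triangle (x y z : vc X) :
  nnorm (vsub x z) <= nnorm (vsub x y) + nnorm (vsub y z).
Proof.
replace (vsub x z) with (vadd (vsub x y) (vsub y z)); [apply ns_norm_triangle|].
unfold vsub. rewrite <- ns_add_assoc, (ns_add_assoc (vopp y)), (ns_add_comm (vopp y) y),
  ns_add_opp, add_0l.
reflexivity.
Qed.

Lemma norm_small_eq0 (x : vc X) : (forall eps, eps > 0 -> nnorm x < eps) -> x = v0 X.
Proof.
intro H. apply ns_norm_zero. pose proof (ns_norm_nonneg x).
destruct (Rle_lt_or_eq_dec 0 (nnorm x) H0) as [Hl | He]; [|auto].
specialize (H (nnorm x / 2) ltac:(lra)). lra.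
Qed.

End VectorAlgebra.

Section HamelBasis.
Context {K : Scalars} (laws : ScalarLaws K) (X : NormedSpace K).

Lemma lincomb_app (l1 l2 : list (sc K * vc X)) :
  lincomb (l1 ++ l2) = vadd (lincomb l1) (lincomb l2).
Proof.
induction l1 as [|[a x] t IH]; simpl.
- rewrite add_0l. reflexivity.
- rewrite IH, ns_add_assoc. reflexivity.
Qed.

Lemma lincomb_mid l1 (a : sc K) (x : vc X) l2 :
  lincomb (l1 ++ (a, x) :: l2) = vadd (vscal a x) (lincomb (l1 ++ l2)).
Proof.
rewrite !lincomb_app. simpl.
rewrite !ns_add_assoc, (ns_add_comm (lincomb l1)). reflexivity.
Qed.

Definition scale_coeffs (b : sc K) (l : list (sc K * vc X)) :=
  map (fun ax => (smul K b (fst ax), snd ax)) l.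

Lemma lincomb_scale b (l : list (sc K * vc X)) :
  lincomb (scale_coeffs b l) = vscal b (lincomb l).
Proof.
induction l as [|[a x] t IH]; simpl.
- rewrite scal_0r. reflexivity.
- rewrite IH, ns_scal_distr_v, ns_scal_assoc. reflexivity.
Qed.

Lemma in_map_snd_split {A B} (x : B) (l : list (A * B)) :
  In x (map snd l) -> exists l1 a l2, l = l1 ++ (a, x) :: l2.
Proof.
intro H. apply in_map_iff in H. destruct H as [[a y] [Hy Hin]]. simpl in Hy. subst y.
apply in_split in Hin. destruct Hin as [l1 [l2 ->]]. eauto.
Qed.

(** Adding a vector outside the span keeps a family linearly independent:
    in a vanishing combination its coefficient must be 0, since otherwise
    (dividing by it) the vector would lie in the span. *)
Lemma indep_extend (B : vc X -> Prop) (x : vc X) :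
  lin_indep B -> ~ in_span B x -> lin_indep (fun y => B y \/ y = x).
Proof.
intros HB Hx l Hnd Hf H0.
destruct (classic (In x (map snd l))) as [Hin | Hnin].
- destruct (in_map_snd_split x l Hin) as [l1 [a [l2 ->]]].
  rewrite map_app in Hnd. simpl in Hnd.
  assert (Hnd2 := NoDup_remove_1 _ _ _ Hnd).
  assert (Hni := NoDup_remove_2 _ _ _ Hnd).
  rewrite <- map_app in Hnd2, Hni.
  assert (HfB : Forall (fun ax => B (snd ax)) (l1 ++ l2)).
  { apply Forall_forall. intros [c y] Hy. simpl.
    assert (Hy' : In (c, y) (l1 ++ (a, x) :: l2)).
    { apply in_app_or in Hy. apply in_or_app. destruct Hy; [left | right; right]; auto. }
    rewrite Forall_forall in Hf. destruct (Hf _ Hy') as [Hb | Heq]; [exact Hb|].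
    simpl in Heq. subst y. exfalso. apply Hni. apply in_map_iff. exists (c, x). auto. }
  rewrite lincomb_mid in H0.
  destruct (classic (a = s0 K)) as [Ha | Ha].
  + subst a. rewrite (scal_0l laws), add_0l in H0.
    pose proof (HB _ Hnd2 HfB H0) as Hz.
    apply Forall_app in Hz. destruct Hz as [Hz1 Hz2].
    apply Forall_app. split; [exact Hz1 | constructor; [reflexivity | exact Hz2]].
  + exfalso. apply Hx. destruct (smul_inv laws a Ha) as [b Hb].
    assert (E : vadd x (vscal b (lincomb (l1 ++ l2))) = v0 X).
    { rewrite <- (scal_0r X b), <- H0, ns_scal_distr_v, ns_scal_assoc, Hb, ns_scal_1.
      reflexivity. }
    apply opp_unique in E.
    exists (scale_coeffs (sopp K b) (l1 ++ l2)). split.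
    * unfold scale_coeffs. apply Forall_map. exact HfB.
    * rewrite lincomb_scale, (scal_opp laws), E, opp_opp. reflexivity.
- apply HB; auto.
  apply Forall_forall. intros [c y] Hy. rewrite Forall_forall in Hf.
  destruct (Hf _ Hy) as [Hb | Heq]; [exact Hb|].
  simpl in Heq. subst y. exfalso. apply Hnin. apply in_map_iff. exists (c, x). auto.
Qed.

Lemma chain_bounds_list {A T : Type} (F : (T -> Prop) -> Prop)
  (Htot : forall S1 S2, F S1 -> F S2 -> (forall t, S1 t -> S2 t) \/ (forall t, S2 t -> S1 t))
  (l : list (A * T)) :
  Forall (fun ax => exists S, F S /\ S (snd ax)) l ->
  l = nil \/ exists S, F S /\ Forall (fun ax => S (snd ax)) l.
Proof.
induction l as [|ax t IH]; intro H; [left; reflexivity | right].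
inversion H as [|? ? [S [HS HSa]] Ht]; subst.
destruct (IH Ht) as [-> | [S' [HS' Hf]]].
- exists S. split; [exact HS | constructor; [exact HSa | constructor]].
- destruct (Htot S S' HS HS') as [Hs | Hs].
  + exists S'. split; [exact HS' | constructor; [apply Hs; exact HSa | exact Hf]].
  + exists S. split; [exact HS | constructor; [exact HSa |]].
    eapply Forall_impl; [|exact Hf]. intros a Ha. apply Hs. exact Ha.
Qed.

Lemma hamel_basis_exists : exists B : vc X -> Prop, hamel_basis_of X (fun _ => True) B.
Proof.
destruct (@classical_sets.Zorn_bigcup (vc X) (fun B => lin_indep B)) as [B [HB Hmax]].
- intros F HF Htot l Hnd Hf H0.
  destruct (chain_bounds_list F Htot l) as [-> | [S [HS Hf']]].
  + eapply Forall_impl; [|exact Hf]. intros [a x] [S HS Hx]. exists S. split; assumption.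
  + constructor.
  + exact (HF S HS l Hnd Hf' H0).
- exists B. split; [intros; exact I|]. split; [exact HB|].
  intros x _. apply NNPP. intro Hx.
  apply (Hmax (fun y => B y \/ y = x)).
  + split.
    * intros t Ht. left. exact Ht.
    * intro Hsub. apply Hx. exists ((s1 K, x) :: nil). split.
      { constructor; [exact (Hsub x (or_intror eq_refl)) | constructor]. }
      simpl. rewrite ns_add_0, ns_scal_1. reflexivity.
  + exact (indep_extend B x HB Hx).
Qed.

End HamelBasis.

Section HamelTransport.
Context {K : Scalars} {X : NormedSpace K} {V : VSops K} (E : vc X -> vc V).
Hypothesis E_add : forall x y, E (vadd x y) = vadd (E x) (E y).
Hypothesis E_scal : forall a x, E (vscal a x) = vscal a (E x).
Hypothesis E_zero : E (v0 X) = v0 V.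
Hypothesis E_inj : forall x y, E x = E y -> x = y.

Definition lin_range (w : vc V) : Prop := exists x, w = E x.

Definition map_coeffs (l : list (sc K * vc X)) : list (sc K * vc V) :=
  map (fun ax => (fst ax, E (snd ax))) l.

Lemma lincomb_map_coeffs l : lincomb (map_coeffs l) = E (lincomb l).
Proof.
induction l as [|[a x] t IH]; simpl.
- symmetry. exact E_zero.
- rewrite IH, E_add, E_scal. reflexivity.
Qed.

Lemma map_coeffs_onto (BX : vc X -> Prop) (l : list (sc K * vc V)) :
  Forall (fun ax => exists x, BX x /\ snd ax = E x) l ->
  exists l', l = map_coeffs l' /\ Forall (fun ax => BX (snd ax)) l'.
Proof.
induction l as [|[a w] t IH]; intro H.
- exists nil. split; [reflexivity | constructor].
- inversion H as [|? ? [x [Hx Hw]] Ht]; subst.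
  destruct (IH Ht) as [l' [-> Hf']].
  exists ((a, x) :: l'). simpl in Hw. rewrite Hw. split; [reflexivity | constructor; assumption].
Qed.

Lemma hamel_basis_transport (BX : vc X -> Prop) :
  hamel_basis_of X (fun _ => True) BX ->
  exists BW : vc V -> Prop,
    hamel_basis_of V lin_range BW /\
    exists f : {x : vc X | BX x} -> {w : vc V | BW w}, bijective_map f.
Proof.
intros [_ [HBi HBs]].
exists (fun w => exists x, BX x /\ w = E x). split; [split; [|split] |].
- intros w [x [_ ->]]. exists x. reflexivity.
- intros l Hnd Hf H0. destruct (map_coeffs_onto BX l Hf) as [l' [-> Hf']].
  rewrite lincomb_map_coeffs, <- E_zero in H0. apply E_inj in H0.
  assert (Hnd' : NoDup (map snd l')).
  { unfold map_coeffs in Hnd. rewrite map_map in Hnd.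
    apply (NoDup_map_inv E). rewrite map_map. exact Hnd. }
  pose proof (HBi l' Hnd' Hf' H0) as Hz.
  unfold map_coeffs. apply Forall_map. exact Hz.
- intros w [x ->]. destruct (HBs x I) as [l' [Hf' ->]].
  exists (map_coeffs l'). split; [| symmetry; apply lincomb_map_coeffs].
  unfold map_coeffs. apply Forall_map. eapply Forall_impl; [|exact Hf'].
  intros [a x] Hx. exists x. split; [exact Hx | reflexivity].
- exists (fun xb => exist _ (E (proj1_sig xb)) (ex_intro _ (proj1_sig xb)
                                  (conj (proj2_sig xb) eq_refl))).
  split.
  + intros [x1 H1] [x2 H2] Heq. apply (f_equal (@proj1_sig _ _)) in Heq. simpl in Heq.
    apply E_inj in Heq. subst x2. f_equal. apply proof_irrelevance.
  + intros [w [x [Hx ->]]]. exists (exist _ x Hx). simpl. f_equal.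
Qed.

End HamelTransport.

Section NonnegSeries.

Lemma partial_sum_nonneg (a : nat -> R) : (forall n, 0 <= a n) -> forall N, 0 <= sum_f_R0 a N.
Proof. intros Ha N; induction N; simpl; [apply Ha|]. specialize (Ha (S N)). lra. Qed.

Lemma partial_sum_growing (a : nat -> R) : (forall n, 0 <= a n) -> Un_growing (sum_f_R0 a).
Proof. intros Ha n. simpl. specialize (Ha (S n)). lra. Qed.

Lemma summable_of_bounded (a : nat -> R) : (forall n, 0 <= a n) ->
  (exists C, forall N, sum_f_R0 a N <= C) -> summable a.
Proof.
intros Ha [C HC].
destruct (Un_cv_crit (sum_f_R0 a) (partial_sum_growing a Ha)) as [l Hl].
- exists C. intros x [i ->]. apply HC.
- exists l. exact Hl.
Qed.

Lemma bounded_of_summable (a : nat -> R) : (forall n, 0 <= a n) -> summable a ->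
  exists C, forall N, sum_f_R0 a N <= C.
Proof.
intros Ha [l Hl]. exists l. intro N.
apply (growing_ineq (sum_f_R0 a) l (partial_sum_growing a Ha) Hl).
Qed.

Lemma term_le_sum (a : nat -> R) s : (forall n, 0 <= a n) -> infinite_sum a s ->
  forall n, a n <= s.
Proof.
intros Ha Hs n. apply Rle_trans with (sum_f_R0 a n).
- destruct n; simpl; [lra|]. pose proof (partial_sum_nonneg a Ha n). lra.
- apply (growing_ineq (sum_f_R0 a) s (partial_sum_growing a Ha) Hs).
Qed.

Lemma summable_le (a b : nat -> R) M : (forall n, 0 <= a n) -> (forall n, 0 <= b n) ->
  0 <= M -> (forall n, a n <= M * b n) -> summable b -> summable a.
Proof.
intros Ha Hb HM Hab Hsb. destruct (bounded_of_summable b Hb Hsb) as [C HC].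
apply summable_of_bounded; [exact Ha|]. exists (M * C). intro N.
apply Rle_trans with (M * sum_f_R0 b N).
- induction N; simpl; [apply Hab|]. specialize (Hab (S N)). lra.
- apply Rmult_le_compat_l; auto.
Qed.

Lemma summable_ext (f g : nat -> R) : (forall n, f n = g n) -> summable f -> summable g.
Proof. intros H Hs. replace g with f; [exact Hs|]. apply functional_extensionality. exact H. Qed.

End NonnegSeries.

(** The p-series: sum (k+1)^(-s) converges for s > 1 and diverges for s = 1.
    Both follow by comparing with the telescoping bounds
    1/(m+1) <= ln(m+1) - ln m <= 1/m. *)
Section PSeries.

Lemma ln_le_sub1 y : 0 < y -> ln y <= y - 1.
Proof. intro Hy. pose proof (exp_ineq1_le (ln y)). rewrite exp_ln in H by exact Hy. lra. Qed.

Lemma ln_succ_lower m : 1 <= m -> / (m + 1) <= ln (m + 1) - ln m.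
Proof.
intro Hm. assert (Hp : 0 < m / (m + 1)) by (apply Rdiv_lt_0_compat; lra).
pose proof (ln_le_sub1 _ Hp) as H. unfold Rdiv in H.
rewrite ln_mult, ln_Rinv in H by (try apply Rinv_0_lt_compat; lra).
replace (m * / (m + 1) - 1) with (- / (m + 1)) in H by (field; lra). lra.
Qed.

Lemma ln_succ_upper m : 1 <= m -> ln (m + 1) - ln m <= / m.
Proof.
intro Hm. assert (Hp : 0 < (m + 1) / m) by (apply Rdiv_lt_0_compat; lra).
pose proof (ln_le_sub1 _ Hp) as H. unfold Rdiv in H.
rewrite ln_mult, ln_Rinv in H by (try apply Rinv_0_lt_compat; lra).
replace ((m + 1) * / m - 1) with (/ m) in H by (field; lra). lra.
Qed.

(** t (m+1)^(-1-t) <= m^(-t) - (m+1)^(-t): the terms of the p-series are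
    dominated by a telescoping sequence. *)
Lemma pseries_term_telescope m t : 1 <= m -> 0 < t ->
  t * Rpower (m + 1) (- (1 + t)) <= Rpower m (- t) - Rpower (m + 1) (- t).
Proof.
intros Hm Ht. unfold Rpower.
set (A := exp (- t * ln (m + 1))).
assert (HA : 0 < A) by apply exp_pos.
assert (E1 : exp (- t * ln m) = A * exp (t * (ln (m + 1) - ln m))).
{ unfold A. rewrite <- exp_plus. f_equal. ring. }
assert (E2 : exp (- (1 + t) * ln (m + 1)) = A * / (m + 1)).
{ unfold A. replace (/ (m + 1)) with (exp (- ln (m + 1)))
    by (rewrite exp_Ropp, exp_ln by lra; reflexivity).
  rewrite <- exp_plus. f_equal. ring. }
rewrite E1, E2.
pose proof (exp_ineq1_le (t * (ln (m + 1) - ln m))).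
pose proof (ln_succ_lower m Hm).
assert (t * / (m + 1) <= t * (ln (m + 1) - ln m)) by (apply Rmult_le_compat_l; lra).
assert (A * (1 + t * / (m + 1)) <= A * exp (t * (ln (m + 1) - ln m)))
  by (apply Rmult_le_compat_l; lra).
nra.
Qed.

Lemma pseries_summable s : 1 < s -> summable (fun k => Rpower (INR k + 1) (- s)).
Proof.
intro Hs. set (t := s - 1). assert (Ht : 0 < t) by (unfold t; lra).
assert (Hit : 0 < / t) by (apply Rinv_0_lt_compat; lra).
replace (- s) with (- (1 + t)) by (unfold t; ring).
apply summable_of_bounded; [intro; left; apply exp_pos|].
exists (1 + / t). intro N.
assert (H : sum_f_R0 (fun k => Rpower (INR k + 1) (- (1 + t))) N
            <= 1 + / t * (1 - Rpower (INR N + 1) (- t))).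
{ induction N.
  - simpl. unfold Rpower. rewrite Rplus_0_l, ln_1, !Rmult_0_r, exp_0. lra.
  - rewrite tech5, S_INR.
    assert (Hm : 1 <= INR N + 1) by (pose proof (pos_INR N); lra).
    pose proof (pseries_term_telescope (INR N + 1) t Hm Ht) as Htel.
    apply (Rmult_le_compat_l (/ t)) in Htel; [|lra].
    rewrite <- Rmult_assoc, Rinv_l, Rmult_1_l in Htel by lra.
    lra. }
assert (0 < Rpower (INR N + 1) (- t)) by apply exp_pos. nra.
Qed.

Lemma harmonic_not_summable : ~ summable (fun k => / (INR k + 1)).
Proof.
intro Hs.
assert (Hpos : forall k, 0 <= / (INR k + 1)).
{ intro k. left. apply Rinv_0_lt_compat. pose proof (pos_INR k). lra. }
destruct (bounded_of_summable _ Hpos Hs) as [C HC].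
assert (H : forall N, ln (INR N + 2) <= sum_f_R0 (fun k => / (INR k + 1)) N).
{ induction N.
  - simpl. replace (0 + 1) with 1 by ring. replace (0 + 2) with 2 by ring.
    rewrite Rinv_1. pose proof (ln_le_sub1 2). lra.
  - rewrite tech5, S_INR.
    assert (Hm : 1 <= INR N + 2) by (pose proof (pos_INR N); lra).
    pose proof (ln_succ_upper (INR N + 2) Hm).
    replace (INR N + 1 + 1) with (INR N + 2) by ring.
    replace (INR N + 1 + 2) with (INR N + 2 + 1) by ring.
    lra. }
destruct (INR_unbounded (exp C)) as [N HN].
specialize (H N). specialize (HC N).
assert (ln (exp C) < ln (INR N + 2)) by (apply ln_increasing; [apply exp_pos | lra]).
rewrite ln_exp in H0. lra.
Qed.

End PSeries.

Section Subsequence.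
Variable phi : nat -> nat.
Hypothesis phi_incr : forall k, (phi k < phi (S k))%nat.

Lemma incr_lt i j : (i < j)%nat -> (phi i < phi j)%nat.
Proof. intro Hij. induction Hij; [apply phi_incr | specialize (phi_incr m); lia]. Qed.

Lemma incr_le i j : (i <= j)%nat -> (phi i <= phi j)%nat.
Proof.
intro Hij. destruct (Nat.eq_dec i j) as [-> | Hne]; [lia|].
pose proof (incr_lt i j). lia.
Qed.

Lemma incr_inj i j : phi i = phi j -> i = j.
Proof.
intro H. destruct (Nat.lt_total i j) as [H1 | [H1 | H1]]; auto.
- pose proof (incr_lt i j H1). lia.
- pose proof (incr_lt j i H1). lia.
Qed.

Lemma incr_ge k : (k <= phi k)%nat.
Proof. induction k; [lia|]. specialize (phi_incr k). lia. Qed.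

Lemma partial_sum_zero (f : nat -> R) m :
  (forall n, (n <= m)%nat -> f n = 0) -> sum_f_R0 f m = 0.
Proof.
induction m; intro H; simpl.
- apply H. lia.
- rewrite IHm by (intros; apply H; lia). rewrite H by lia. ring.
Qed.

Lemma partial_sum_gap (f : nat -> R) a b : (a <= b)%nat ->
  (forall n, (a < n <= b)%nat -> f n = 0) -> sum_f_R0 f b = sum_f_R0 f a.
Proof.
intro Hab. induction Hab; intro H; [reflexivity|].
simpl. rewrite IHHab by (intros; apply H; lia). rewrite H by lia. ring.
Qed.

Lemma partial_sum_reindex (f : nat -> R) :
  (forall n, (forall k, phi k <> n) -> f n = 0) ->
  forall N, sum_f_R0 f (phi N) = sum_f_R0 (fun k => f (phi k)) N.
Proof.
intros Hf. induction N.
- simpl sum_f_R0 at 2. destruct (phi 0%nat) as [|m] eqn:E; [reflexivity|].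
  simpl. rewrite partial_sum_zero; [ring|].
  intros n Hn. apply Hf. intros k Hk. pose proof (incr_le 0 k ltac:(lia)). lia.
- simpl. destruct (phi (S N)) as [|m] eqn:E; [specialize (phi_incr N); lia|].
  simpl. rewrite <- IHN, <- E. f_equal.
  apply partial_sum_gap; [specialize (phi_incr N); lia|].
  intros n Hn. apply Hf. intros j Hj.
  destruct (Nat.le_gt_cases j N) as [Hjk | Hjk].
  + pose proof (incr_le j N Hjk). lia.
  + pose proof (incr_le (S N) j Hjk). lia.
Qed.

Lemma summable_subseq_iff (f : nat -> R) : (forall n, 0 <= f n) ->
  (forall n, (forall k, phi k <> n) -> f n = 0) ->
  summable f <-> summable (fun k => f (phi k)).
Proof.
intros Hpos Hf. split; intro Hs.
- destruct (bounded_of_summable _ Hpos Hs) as [C HC].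
  apply summable_of_bounded; [intro; apply Hpos|]. exists C. intro N.
  rewrite <- (partial_sum_reindex f Hf). apply HC.
- destruct (bounded_of_summable _ (fun k => Hpos (phi k)) Hs) as [C HC].
  apply summable_of_bounded; [exact Hpos|]. exists C. intro N.
  apply Rle_trans with (sum_f_R0 f (phi N)).
  + apply tech9; [apply partial_sum_growing; exact Hpos | apply incr_ge].
  + rewrite (partial_sum_reindex f Hf). apply HC.
Qed.

End Subsequence.

Section Rpow.

Lemma rpow_nonneg a q : 0 <= rpow a q.
Proof. unfold rpow. destruct (Rle_dec a 0); [lra | left; apply exp_pos]. Qed.

Lemma rpow_0 q : rpow 0 q = 0.
Proof. unfold rpow. destruct (Rle_dec 0 0); [reflexivity | lra]. Qed.

Lemma rpow_pos a q : 0 < a -> rpow a q = Rpower a q.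
Proof. intro H. unfold rpow. destruct (Rle_dec a 0); [lra | reflexivity]. Qed.

Lemma rpow_le_mul a b M q : 0 <= q -> 0 <= a -> 0 <= b -> 0 <= M -> a <= M * b ->
  rpow a q <= rpow M q * rpow b q.
Proof.
intros Hq Ha Hb HM Hab.
destruct (Rle_dec a 0) as [Ha0 | Ha0].
- replace (rpow a q) with 0 by (unfold rpow; destruct (Rle_dec a 0); [reflexivity | lra]).
  pose proof (rpow_nonneg M q). pose proof (rpow_nonneg b q). nra.
- assert (HM0 : 0 < M) by (destruct (Rle_dec M 0); nra).
  assert (Hb0 : 0 < b) by (destruct (Rle_dec b 0); nra).
  rewrite !rpow_pos by lra. rewrite Rpower_mult_distr by lra.
  apply Rle_Rpower_l; lra.
Qed.

Lemma rpow_lt_inv a e q : 0 < q -> 0 <= a -> 0 < e -> rpow a q < Rpower e q -> a < e.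
Proof.
intros Hq Ha He H. destruct (Rlt_le_dec a e) as [Hl | Hl]; [exact Hl|].
rewrite rpow_pos in H by lra.
assert (Rpower e q <= Rpower a q) by (apply Rle_Rpower_l; lra). lra.
Qed.

End Rpow.

Section Spread.
Context {K : Scalars} (laws : ScalarLaws K) (Xs : nat -> NormedSpace K) (phi : nat -> nat).
Hypothesis phi_incr : forall k, (phi k < phi (S k))%nat.

Definition preimage (n : nat) : option {k | phi k = n} :=
  match excluded_middle_informative (exists k, phi k = n) with
  | left H => Some (constructive_indefinite_description _ H)
  | right _ => None
  end.

Definition spread (y : forall k, vc (Xs (phi k))) : vc (seqVS Xs) :=
  fun n => match preimage n with
           | Some (exist k e) => eq_rect (phi k) (fun m => vc (Xs m)) (y k) n e
           | None => v0 (Xs n)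
           end.

Lemma spread_at y k : spread y (phi k) = y k.
Proof.
unfold spread, preimage.
destruct (excluded_middle_informative (exists j, phi j = phi k)) as [H | H].
- destruct (constructive_indefinite_description _ H) as [j e].
  pose proof (incr_inj phi phi_incr j k e). subst j.
  symmetry. apply (eq_rect_eq_dec Nat.eq_dec (fun m => vc (Xs m))).
- exfalso. apply H. exists k. reflexivity.
Qed.

Lemma spread_off y n : (forall k, phi k <> n) -> spread y n = v0 (Xs n).
Proof.
intro H. unfold spread, preimage.
destruct (excluded_middle_informative (exists j, phi j = n)) as [[j e] | _]; [|reflexivity].
exfalso. exact (H j e).
Qed.

Lemma spread_add y z n :
  spread (fun k => vadd (y k) (z k)) n = vadd (spread y n) (spread z n).
Proof.
unfold spread. destruct (preimage n) as [[k e] |].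
- destruct e. reflexivity.
- symmetry. apply ns_add_0.
Qed.

Lemma spread_scal (a : sc K) y n : spread (fun k => vscal a (y k)) n = vscal a (spread y n).
Proof.
unfold spread. destruct (preimage n) as [[k e] |].
- destruct e. reflexivity.
- symmetry. apply scal_0r.
Qed.

Lemma in_lq_spread q y :
  in_lq Xs q (spread y) <-> summable (fun k => rpow (nnorm (y k)) q).
Proof.
unfold in_lq. rewrite (summable_subseq_iff phi phi_incr).
- split; apply summable_ext; intro k; rewrite spread_at; reflexivity.
- intro; apply rpow_nonneg.
- intros n Hn. rewrite (spread_off y n Hn), (norm_0 laws). apply rpow_0.
Qed.

End Spread.

Definition coord_conv {K : Scalars} (Xs : nat -> NormedSpace K)
    (u : nat -> vc (seqVS Xs)) (y : vc (seqVS Xs)) :=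
  forall n eps, eps > 0 -> exists N, forall k, (k >= N)%nat -> nnorm (vsub (u k n) (y n)) < eps.

Lemma lp_plus_conv_coord {K : Scalars} (Xs : nat -> NormedSpace K) (p : R) u y :
  0 <= p -> lp_plus_conv Xs p u y -> coord_conv Xs u y.
Proof.
intros Hp Hconv n e He.
assert (Hpe : Rpower e (p + 1) > 0) by apply exp_pos.
destruct (Hconv (p + 1) ltac:(lra) _ Hpe) as [N HN]. exists N. intros k Hk.
destruct (HN k Hk) as [s [Hs1 Hs2]].
apply (rpow_lt_inv _ _ (p + 1)); [lra | apply ns_norm_nonneg | exact He |].
pose proof (term_le_sum _ s (fun m => rpow_nonneg _ _) Hs1 n). simpl in H. lra.
Qed.

(** If [X] is complete, the range
    of [E] is closed under coordinatewise limits: a coordinatewise convergent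
    sequence [E (xs k)] makes [xs] Cauchy (through coordinate [n0]), and the
    limit of [xs] is mapped to the limit sequence (through the upper bound). *)
Section CoordClosedRange.
Context {K : Scalars} (laws : ScalarLaws K) (X : NormedSpace K) (Xs : nat -> NormedSpace K)
  (E : vc X -> vc (seqVS Xs)) (C : R) (n0 : nat).
Hypothesis X_complete : complete X.
Hypothesis C_pos : 0 < C.
Hypothesis E_sub : forall x y n, E (vsub x y) n = vsub (E x n) (E y n).
Hypothesis E_upper : forall z n, nnorm (E z n) <= C * nnorm z.
Hypothesis E_lower : forall z, nnorm z <= C * nnorm (E z n0).

Lemma range_coord_closed (xs : nat -> vc X) y :
  coord_conv Xs (fun k => E (xs k)) y -> exists x, y = E x.
Proof.
intro conv.
destruct (X_complete xs) as [xl Hxl].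
{ intros eps Heps.
  destruct (conv n0 (eps / (2 * C))) as [N HN]; [apply Rdiv_lt_0_compat; lra|].
  exists N. intros a b Ha Hb.
  pose proof (E_lower (vsub (xs a) (xs b))) as H1. rewrite E_sub in H1.
  pose proof (norm_sub_triangle _ (E (xs a) n0) (y n0) (E (xs b) n0)) as H2.
  rewrite (norm_sub_sym laws _ (y n0)) in H2.
  pose proof (HN a Ha). pose proof (HN b Hb).
  assert (C * (eps / (2 * C)) = eps / 2) by (field; lra).
  nra. }
exists xl. apply functional_extensionality_dep. intro n.
apply sub_eq0. apply norm_small_eq0. intros eps Heps.
destruct (conv n (eps / 2)) as [N1 HN1]; [lra|].
destruct (Hxl (eps / (2 * C))) as [N2 HN2]; [apply Rdiv_lt_0_compat; lra|].
set (k := Nat.max N1 N2).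
specialize (HN1 k ltac:(lia)). specialize (HN2 k ltac:(lia)).
pose proof (norm_sub_triangle _ (y n) (E (xs k) n) (E xl n)) as H1.
rewrite (norm_sub_sym laws _ (y n) (E (xs k) n)) in H1.
pose proof (E_upper (vsub (xs k) xl) n) as H2. rewrite E_sub in H2.
assert (C * nnorm (vsub (xs k) xl) < C * (eps / (2 * C))) by (apply Rmult_lt_compat_l; lra).
assert (C * (eps / (2 * C)) = eps / 2) by (field; lra).
lra.
Qed.

End CoordClosedRange.

Section WeightedEmbedding.
Context {K : Scalars} (laws : ScalarLaws K) (X : NormedSpace K) (Xs : nat -> NormedSpace K)
  (phi : nat -> nat) (p delta : R) (T : forall k, vc X -> vc (Xs (phi k))).
Hypothesis phi_incr : forall k, (phi k < phi (S k))%nat.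
Hypothesis p_pos : 0 < p.
Hypothesis delta_pos : 0 < delta.
Hypothesis T_lin : forall k, linear_map (T k).
Hypothesis T_iso : forall k x,
  nnorm (T k x) <= delta * nnorm x /\ nnorm x <= delta * nnorm (T k x).

Definition weight (k : nat) : R := Rpower (INR k + 1) (- / p).

Definition embed (x : vc X) : vc (seqVS Xs) :=
  spread Xs phi (fun k => vscal (real_emb laws (weight k)) (T k x)).

Lemma weight_pos k : 0 < weight k.
Proof. apply exp_pos. Qed.

Lemma weight_le_1 k : weight k <= 1.
Proof.
unfold weight. rewrite <- (Rpower_O (INR k + 1)) at 2 by (pose proof (pos_INR k); lra).
apply Rle_Rpower; [pose proof (pos_INR k); lra |].
assert (0 < / p) by (apply Rinv_0_lt_compat; lra). lra.
Qed.

Lemma weight_0 : weight 0 = 1.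
Proof. unfold weight, Rpower. simpl. rewrite Rplus_0_l, ln_1, Rmult_0_r. apply exp_0. Qed.

Lemma rpow_weight q k : rpow (weight k) q = Rpower (INR k + 1) (- (q / p)).
Proof.
rewrite rpow_pos by apply weight_pos. unfold weight. rewrite Rpower_mult.
f_equal. field. lra.
Qed.

Lemma embed_add x y : embed (vadd x y) = vadd (embed x) (embed y).
Proof.
apply functional_extensionality_dep. intro n. unfold embed.
simpl. rewrite <- spread_add. f_equal.
apply functional_extensionality_dep. intro k.
destruct (T_lin k) as [Hadd _]. rewrite Hadd, ns_scal_distr_v. reflexivity.
Qed.

Lemma embed_scal a x : embed (vscal a x) = vscal a (embed x).
Proof.
apply functional_extensionality_dep. intro n. unfold embed.
simpl. rewrite <- spread_scal. f_equal.
apply functional_extensionality_dep. intro k.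
destruct (T_lin k) as [_ Hscal]. rewrite Hscal, !ns_scal_assoc, (smul_comm laws). reflexivity.
Qed.

Lemma embed_zero : embed (v0 X) = v0 (seqVS Xs).
Proof.
rewrite <- (scal_0l laws X (v0 X)), embed_scal.
apply functional_extensionality_dep. intro n. apply scal_0l. exact laws.
Qed.

Lemma embed_sub x y n : embed (vsub x y) n = vsub (embed x n) (embed y n).
Proof.
unfold vsub. rewrite embed_add, (opp_scal_m1 laws X y), embed_scal.
simpl. rewrite <- (opp_scal_m1 laws). reflexivity.
Qed.

Lemma weighted_norm x k :
  nnorm (vscal (real_emb laws (weight k)) (T k x)) = weight k * nnorm (T k x).
Proof.
rewrite ns_norm_scal, (sabs_real_emb laws), Rabs_pos_eq by (left; apply weight_pos).
reflexivity.
Qed.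

Lemma embed_norm_at x k : nnorm (embed x (phi k)) = weight k * nnorm (T k x).
Proof. unfold embed. rewrite (spread_at Xs phi phi_incr). apply weighted_norm. Qed.

Lemma embed_upper z n : nnorm (embed z n) <= delta * nnorm z.
Proof.
pose proof (ns_norm_nonneg z).
destruct (classic (exists k, phi k = n)) as [[k <-] | Hn].
- rewrite embed_norm_at. destruct (T_iso k z) as [H1 _].
  pose proof (weight_pos k). pose proof (weight_le_1 k). pose proof (ns_norm_nonneg (T k z)).
  nra.
- unfold embed. rewrite spread_off, (norm_0 laws).
  + nra.
  + intros k Hk. apply Hn. exists k. exact Hk.
Qed.

(** The coordinate [phi 0], of weight 1, controls the norm of [z]. *)
Lemma embed_lower z : nnorm z <= delta * nnorm (embed z (phi 0%nat)).
Proof. rewrite embed_norm_at, weight_0, Rmult_1_l. apply (T_iso 0%nat z). Qed.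

Lemma embed_inj x y : embed x = embed y -> x = y.
Proof.
intro H. apply sub_eq0. apply ns_norm_zero.
pose proof (embed_lower (vsub x y)) as Hl.
rewrite embed_sub, H in Hl. unfold vsub in Hl |- *. rewrite ns_add_opp, (norm_0 laws) in Hl.
pose proof (ns_norm_nonneg (vadd x (vopp y))). lra.
Qed.

Lemma embed_in_lp_plus x : in_lp_plus Xs p (embed x).
Proof.
intros q Hq. unfold embed. rewrite (in_lq_spread laws Xs phi phi_incr).
apply (summable_le _ (fun k => rpow (weight k) q) (rpow (delta * nnorm x) q)).
- intro; apply rpow_nonneg.
- intro; apply rpow_nonneg.
- apply rpow_nonneg.
- intro k. pose proof (ns_norm_nonneg x). apply rpow_le_mul; try lra.
  + apply ns_norm_nonneg.
  + left. apply weight_pos.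
  + nra.
  + rewrite weighted_norm. destruct (T_iso k x) as [H1 _].
    pose proof (weight_pos k). nra.
- apply summable_ext with (fun k => Rpower (INR k + 1) (- (q / p))).
  + intro k. symmetry. apply rpow_weight.
  + apply pseries_summable. apply (Rmult_lt_reg_r p); [lra|].
    unfold Rdiv. rewrite Rmult_assoc, Rinv_l, Rmult_1_l, Rmult_1_r by lra. exact Hq.
Qed.

Lemma embed_not_in_lp x : x <> v0 X -> ~ in_lq Xs p (embed x).
Proof.
intros Hx Hs. unfold embed in Hs. rewrite (in_lq_spread laws Xs phi phi_incr) in Hs.
assert (Hnx : 0 < nnorm x).
{ destruct (ns_norm_nonneg x) as [H | H]; [exact H|].
  exfalso. apply Hx. apply ns_norm_zero. auto. }
apply harmonic_not_summable.
apply summable_ext with (fun k => rpow (weight k) p).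
{ intro k. rewrite rpow_weight, Rpower_Ropp.
  replace (p / p) with 1 by (field; lra). rewrite Rpower_1; [reflexivity|].
  pose proof (pos_INR k). lra. }
apply (summable_le _ (fun k => rpow (nnorm (vscal (real_emb laws (weight k)) (T k x))) p)
         (rpow (delta / nnorm x) p)); [| | | |exact Hs];
  try (intros; apply rpow_nonneg).
intro k. apply rpow_le_mul; try lra.
- left. apply weight_pos.
- apply ns_norm_nonneg.
- apply Rlt_le. apply Rdiv_lt_0_compat; lra.
- rewrite weighted_norm. destruct (T_iso k x) as [_ H2].
  pose proof (weight_pos k).
  apply (Rmult_le_reg_r (nnorm x)); [exact Hnx|].
  replace (delta / nnorm x * (weight k * nnorm (T k x)) * nnorm x)
    with (weight k * (delta * nnorm (T k x))) by (field; lra).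
  apply Rmult_le_compat_l; lra.
Qed.

Lemma embed_range_closed : complete X -> closed_subspace_lp_plus Xs p (lin_range embed).
Proof.
intro X_complete.
split; [|split; [|split; [|split]]].
- intros w [x ->]. apply embed_in_lp_plus.
- exists (v0 X). symmetry. exact embed_zero.
- intros w1 w2 [x1 ->] [x2 ->]. exists (vadd x1 x2). symmetry. apply embed_add.
- intros a w [x ->]. exists (vscal a x). symmetry. apply embed_scal.
- intros u y Hu _ Hconv.
  destruct (choice (fun k x => u k = embed x) Hu) as [xs Hxs].
  apply (range_coord_closed laws X Xs embed delta (phi 0%nat) X_complete delta_pos
           embed_sub embed_upper embed_lower xs).
  replace (fun k => embed (xs k)) with u by (apply functional_extensionality; exact Hxs).
  apply (lp_plus_conv_coord Xs p); [lra | exact Hconv].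
Qed.

Lemma embed_range_dichotomy w : lin_range embed w ->
  (forall n, w n = v0 (Xs n)) \/ (in_lp_plus Xs p w /\ ~ in_lq Xs p w).
Proof.
intros [x ->]. destruct (classic (x = v0 X)) as [-> | Hx].
- left. rewrite embed_zero. reflexivity.
- right. split; [apply embed_in_lp_plus | apply embed_not_in_lp; exact Hx].
Qed.

End WeightedEmbedding.

Lemma choose_isomorphs {K : Scalars} (X : NormedSpace K) (Y : nat -> NormedSpace K) :
  contains_isomorphs_uniformly X Y ->
  exists delta, 0 < delta /\
    exists T : forall k, vc X -> vc (Y k), (forall k, linear_map (T k)) /\
      forall k x, nnorm (T k x) <= delta * nnorm x /\ nnorm x <= delta * nnorm (T k x).
Proof.
intros [delta [Hdelta HT]]. exists delta. split; [exact Hdelta|].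
exists (fun k => proj1_sig (constructive_indefinite_description _ (HT k))).
split; intro k; apply (proj2_sig (constructive_indefinite_description _ (HT k))).
Qed.

Theorem theorem3p4
  (K : Scalars) (HK : K = RK \/ K = CK)
  (p : R) (Hp : 1 <= p)
  (X : NormedSpace K) (HXc : complete X) (HXinf : infinite_dim X)
  (Xs : nat -> NormedSpace K) (HXsc : forall n, complete (Xs n))
  (Hsub : exists phi : nat -> nat, (forall k, (phi k < phi (S k))%nat) /\
            contains_isomorphs_uniformly X (fun k => Xs (phi k))) :
  exists W : vc (seqVS Xs) -> Prop,
    closed_subspace_lp_plus Xs p W /\
    (forall w, W w -> (forall n, w n = v0 (Xs n)) \/
                      (in_lp_plus Xs p w /\ ~ in_lq Xs p w)) /\
    exists (BX : vc X -> Prop) (BW : vc (seqVS Xs) -> Prop),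
      hamel_basis_of X (fun _ => True) BX /\
      hamel_basis_of (seqVS Xs) W BW /\
      exists f : {x : vc X | BX x} -> {w : vc (seqVS Xs) | BW w}, bijective_map f.
Proof.
destruct (scalar_laws_of K HK) as [laws].
destruct Hsub as [phi [Hphi Hiso]].
destruct (choose_isomorphs X _ Hiso) as [delta [Hdelta [T [Tlin Tiso]]]].
assert (Hp0 : 0 < p) by lra.
set (E := embed laws X Xs phi p T).
exists (lin_range E). split; [|split].
- exact (embed_range_closed laws X Xs phi p delta T Hphi Hp0 Hdelta Tlin Tiso HXc).
- exact (embed_range_dichotomy laws X Xs phi p delta T Hphi Hp0 Hdelta Tlin Tiso).
- destruct (hamel_basis_exists laws X) as [BX HBX].
  destruct (hamel_basis_transport E (embed_add laws X Xs phi p T Tlin)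
              (embed_scal laws X Xs phi p T Tlin) (embed_zero laws X Xs phi p T Tlin)
              (embed_inj laws X Xs phi p delta T Hphi Tlin Tiso) BX HBX) as [BW [HBW Hbij]].
  exists BX, BW. split; [exact HBX|]. split; [exact HBW | exact Hbij].
Qed.
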